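(* Let $(\Omega,\mathcal F,\mathbb P)$ be an atomless probability space, let $X$ and $Y$ be continuously distributed random variables on it, and let $p\in(0,1)$. The following three statements are equivalent: (i) $X$ and $Y$ are weakly comonotonic with respect to $\mathcal P^X_p$; (ii) $X$ and $Y$ are weakly comonotonic with respect to $\mathcal P^Y_p$; (iii) $A^X_p=A^Y_p$ $\mathbb P$-almost surely.
   Context: For a random variable $Z$ and $p\in(0,1)$, $\mathrm{VaR}_p(Z)=\inf\{x\in\mathbb R:\mathbb P(Z\le x)>p\}$ and $A^Z_p=\{\omega\in\Omega: Z(\omega)>\mathrm{VaR}_p(Z)\}$. Let $\mathcal P^Z_p=\{\delta_\omega\times\delta_{\omega'}:\omega\in A^Z_p,\ \omega'\in (A^Z_p)^c\}$, where $\delta_\omega$ is the point mass at $\omega$. For a set $\mathcal P$ of product probability measures $\pi_1\times\pi_2$ on $(\Omega^2,\mathcal F\otimes\mathcal F)$, random variables $X,Y$ are called weakly comonotonic with respect to $\mathcal P$ if $\iint_{\Omega^2}(X(\omega)-X(\omega'))(Y(\omega)-Y(\omega'))\,\pi_1(\mathrm d\omega)\pi_2(\mathrm d\omega')\ge 0$ for every $\pi_1\times\pi_2\in\mathcal P$; for point masses this means $(X(\omega)-X(\omega'))(Y(\omega)-Y(\omega'))\ge0$. Random variables that are $\mathbb P$-a.s. equal are identified, so a statement such as ''$X$ and $Y$ are weakly comonotonic with respect to $\mathcal P^X_p$'' means that it holds for some representative versions of $X$ and $Y$. *)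

From HB Require Import structures.
From mathcomp Require Import all_boot all_order all_algebra.
From mathcomp Require Import all_classical all_reals all_analysis.
Set Implicit Arguments. Unset Strict Implicit. Unset Printing Implicit Defensive.
Import Order.TTheory GRing.Theory Num.Theory.
Import numFieldNormedType.Exports.
Local Open Scope classical_set_scope.
Local Open Scope ring_scope.

Definition atomless d (Omega : measurableType d) (R : realType)
  (P : probability Omega R) : Prop :=
  forall A : set Omega, measurable A -> (0 < P A)%E ->
    exists B : set Omega, [/\ measurable B, B `<=` A & (0 < P B < P A)%E].

Definition dfun d (Omega : measurableType d) (R : realType)
  (P : probability Omega R) (Z : Omega -> R) (x : R) : R :=
  fine (P [set w | Z w <= x]).

Definition continuously_distributed d (Omega : measurableType d) (R : realType)
  (P : probability Omega R) (Z : Omega -> R) : Prop :=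
  continuous (dfun P Z).

Definition lt_ereal (R : realType) (a b : \bar R) : Prop := (a < b)%E.

Definition VaR d (Omega : measurableType d) (R : realType)
  (P : probability Omega R) (p : R) (Z : Omega -> R) : R :=
  inf [set x : R | lt_ereal p%:E (P [set w | Z w <= x])].

Definition Aset d (Omega : measurableType d) (R : realType)
  (P : probability Omega R) (p : R) (Z : Omega -> R) : set Omega :=
  [set w | VaR P p Z < Z w].

(* Weak comonotonicity of X, Y w.r.t. the family of point-mass products
   { delta_w x delta_w' : w in A, w' notin A }: for point masses the integral
   condition reads (X w - X w')(Y w - Y w') >= 0. *)
Definition wcomon_points (Omega : Type) (R : realType) (A : set Omega)
  (X Y : Omega -> R) : Prop :=
  forall w w', A w -> ~ A w' -> 0 <= (X w - X w') * (Y w - Y w').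

Definition wcomon_PX d (Omega : measurableType d) (R : realType)
  (P : probability Omega R) (p : R) (X Y : Omega -> R) : Prop :=
  exists X' Y' : Omega -> R,
    [/\ measurable_fun setT X', measurable_fun setT Y',
        {ae P, forall w, X w = X' w}, {ae P, forall w, Y w = Y' w}
      & wcomon_points (Aset P p X') X' Y'].

Definition wcomon_PY d (Omega : measurableType d) (R : realType)
  (P : probability Omega R) (p : R) (X Y : Omega -> R) : Prop :=
  exists X' Y' : Omega -> R,
    [/\ measurable_fun setT X', measurable_fun setT Y',
        {ae P, forall w, X w = X' w}, {ae P, forall w, Y w = Y' w}
      & wcomon_points (Aset P p Y') X' Y'].

(* Because the distribution functions are continuous, P(Z <= VaR_p Z) = p for
   Z = X, Y, so the two lower sets {X <= VaR_p X} and {Y <= VaR_p Y} have the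
   same mass.  Weak comonotonicity across the cut A^X_p forces one of these
   lower sets to contain the other (if some w in A^X_p has Y w <= VaR_p Y, then
   every w' below the X-cut satisfies Y w' <= Y w); sets of equal finite
   measure, one inside the other, agree a.s., and so do their complements
   A^X_p and A^Y_p.  Conversely, if A^X_p = A^Y_p off a null set N, setting X
   and Y equal to their VaR on N changes neither VaR but removes N from both
   upper sets; now A^X_p = A^Y_p everywhere, and any pair straddling this common
   cut moves X and Y in the same direction.  Condition (ii) is condition (i)
   with X and Y exchanged. *)

From Pilot Require Import Defs.
From HB Require Import structures.
From mathcomp Require Import all_boot all_order all_algebra.
From mathcomp Require Import all_classical all_reals all_analysis.
From mathcomp Require Import lra.
Set Implicit Arguments. Unset Strict Implicit. Unset Printing Implicit Defensive.
Import Order.TTheory GRing.Theory Num.Theory.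
Import numFieldNormedType.Exports.
Local Open Scope classical_set_scope.
Local Open Scope ring_scope.

Lemma continuous_inf_gt (R : realType) (f : R -> R) (p : R) :
  continuous f -> {homo f : x y / x <= y} ->
  (exists x, p < f x) -> (exists y, f y < p) ->
  f (inf [set x | p < f x]) = p.
Proof.
move=> cf ndf [x0 px0] [y0 y0p]; set S := [set x | p < f x]; set q := inf S.
have lbS : lbound S y0.
  move=> x /= px; rewrite leNgt; apply/negP => /ltW/ndf fxy0.
  by have := lt_trans y0p px; rewrite ltNge fxy0.
have hS : has_inf S by split; [exists x0 | exists y0].
have qS x : S x -> q <= x by exact: (ge_inf hS.2).
have [fqp|fqp|//] := ltgtP (f q) p.
- have [e /= e0 he] := iffLR (nbhs_normP _ _) (cvgr_lt _ (cf q) _ fqp).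
  have [x Sx xq] := inf_adherent e0 hS.
  suff : f x < p by rewrite ltNge (ltW Sx).
  by apply: he => /=; rewrite distrC ger0_norm ?subr_ge0 ?qS// ltrBlDl.
- have [e /= e0 he] := iffLR (nbhs_normP _ _) (cvgr_gt _ (cf q) _ fqp).
  have /qS : S (q - e / 2).
    apply: he => /=; rewrite opprB addrC subrK ger0_norm ?divr_ge0 ?(ltW e0)//.
    by rewrite ltr_pdivrMr// ltr_pMr// ltr1n.
  have : 0 < e / 2 by rewrite divr_gt0.
  lra.
Qed.

Section distribution_function.
Context d (T : measurableType d) (R : realType) (P : probability T R).
Variable Z : T -> R.
Hypothesis mZ : measurable_fun setT Z.

Lemma measurable_le_level (x : R) : measurable [set w | Z w <= x].
Proof.
have := mZ measurableT (measurable_itv `]-oo, x]); rewrite setTI.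
by congr measurable; apply/seteqP; split=> w /=; rewrite in_itv.
Qed.

Lemma measure_le_level (x : R) : P [set w | Z w <= x] = (dfun P Z x)%:E.
Proof. by rewrite /dfun fineK// fin_num_measure//; exact: measurable_le_level. Qed.

Lemma dfun_nondecreasing : {homo dfun P Z : x y / x <= y}.
Proof.
move=> x y xy; rewrite -lee_fin -!measure_le_level.
apply: le_measure; rewrite ?inE; try exact: measurable_le_level.
by move=> w /= /le_trans; apply.
Qed.

Let Zrv : {RV P >-> R} := HB.pack Z (isMeasurableFun.Build _ _ _ _ Z mZ).

Let dfun_cdf : dfun P Z = fine \o cdf Zrv.
Proof. by []. Qed.

Lemma dfun_cvgy : dfun P Z x @[x --> +oo%R] --> (1 : R).
Proof. by rewrite dfun_cdf; apply: fine_cvg; exact: cvg_cdfy1. Qed.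

Lemma dfun_cvgNy : dfun P Z x @[x --> -oo%R] --> (0 : R).
Proof. by rewrite dfun_cdf; apply: fine_cvg; exact: cvg_cdfNy0. Qed.

Lemma VaR_inf_dfun (p : R) : VaR P p Z = inf [set x | p < dfun P Z x].
Proof.
(* plain [lt_ereal] would resolve to a library lemma *)
rewrite /VaR; congr inf; apply/seteqP; split=> x /=;
  by rewrite /Defs.lt_ereal measure_le_level lte_fin.
Qed.

Lemma dfun_VaR (p : R) : continuously_distributed P Z -> 0 < p < 1 ->
  dfun P Z (VaR P p Z) = p.
Proof.
move=> cZ /andP[p0 p1]; rewrite VaR_inf_dfun.
apply: continuous_inf_gt => //; first exact: dfun_nondecreasing.
- have [M [_ HM]] := cvgr_gt _ dfun_cvgy _ p1.
  by exists (M + 1); apply: HM; rewrite ltrDl.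
- have [M [_ HM]] := cvgr_lt _ dfun_cvgNy _ p0.
  by exists (M - 1); apply: HM; rewrite ltrBlDr ltrDl.
Qed.

Lemma measure_le_VaR (p : R) : continuously_distributed P Z -> 0 < p < 1 ->
  P [set w | Z w <= VaR P p Z] = p%:E.
Proof. by move=> cZ p01; rewrite measure_le_level dfun_VaR. Qed.

End distribution_function.

Section ae_equivalent_sets.
Context d (T : measurableType d) (R : realType) (mu : {measure set T -> \bar R}).
Implicit Types A B : set T.

Lemma ae_iff_sym A B :
  {ae mu, forall w, A w <-> B w} -> {ae mu, forall w, B w <-> A w}.
Proof. by apply: filterS => w [AB BA]. Qed.

Lemma ae_iff_measure A B : measurable A -> measurable B ->
  {ae mu, forall w, A w <-> B w} -> mu A = mu B.
Proof.
move=> mA mB [N [mN N0 sN]].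
have AB w : ~ N w -> (A w <-> B w) by move=> Nw; apply: contra_notP Nw; exact: sN.
have muDN C : measurable C -> mu C = mu (C `\` N).
  move=> mC; rewrite (measureDI _ mC mN).
  by rewrite [X in _ + X](subset_measure0 _ _ _ N0) ?adde0//; exact: measurableI.
rewrite (muDN A mA) (muDN B mB); congr (mu _); apply/seteqP.
by split=> w [Cw Nw]; split=> //; apply/(AB w Nw).
Qed.

Lemma subset_measure_ae_iff A B : measurable A -> measurable B ->
  A `<=` B -> mu A \is a fin_num -> mu A = mu B -> {ae mu, forall w, A w <-> B w}.
Proof.
move=> mA mB AB muA muAB; exists (B `\` A); split; first exact: measurableD.
- have muBoo : (mu B < +oo)%E by rewrite -muAB ltey_eq muA.
  by rewrite measureD// setIidr//= -muAB subee.
- move=> w /= nAB; split.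
  + by apply: contra_notP nAB => nB; split=> [/AB|/nB].
  + by move=> Aw; apply: nAB; split=> [/AB|].
Qed.

End ae_equivalent_sets.

Section versions.
Context d (T : measurableType d) (R : realType) (P : probability T R).
Variables Z Z' : T -> R.
Hypotheses (mZ : measurable_fun setT Z) (mZ' : measurable_fun setT Z').
Hypothesis ZZ' : {ae P, forall w, Z w = Z' w}.

Lemma ae_eq_dfun : dfun P Z = dfun P Z'.
Proof.
apply/funext => x; rewrite /dfun.
rewrite (ae_iff_measure (measurable_le_level mZ x) (measurable_le_level mZ' x))//.
by apply: filterS ZZ' => w /= ->.
Qed.

Lemma ae_eq_VaR (p : R) : VaR P p Z = VaR P p Z'.
Proof. by rewrite !VaR_inf_dfun// ae_eq_dfun. Qed.

Lemma ae_eq_Aset (p : R) : {ae P, forall w, Aset P p Z w <-> Aset P p Z' w}.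
Proof. by rewrite /Aset ae_eq_VaR; apply: filterS ZZ' => w /= ->. Qed.

Lemma ae_eq_continuously_distributed :
  continuously_distributed P Z -> continuously_distributed P Z'.
Proof. by rewrite /continuously_distributed ae_eq_dfun. Qed.

End versions.

Definition override_on (T R : Type) (N : set T) (c : R) (Z : T -> R) (w : T) : R :=
  if w \in N then c else Z w.

Section override_on_null_set.
Context d (T : measurableType d) (R : realType) (P : probability T R).
Variables (N : set T) (Z : T -> R).
Hypotheses (mN : measurable N) (N0 : P N = 0) (mZ : measurable_fun setT Z).

Lemma measurable_override_on (c : R) : measurable_fun setT (override_on N c Z).
Proof.
apply: measurable_fun_ifT => //; apply: (measurable_fun_bool true).
rewrite setTI (_ : _ @^-1` _ = N)//.
by apply/seteqP; split=> w /=; [move/set_mem|move/mem_set].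
Qed.

Lemma ae_eq_override_on (c : R) : {ae P, forall w, Z w = override_on N c Z w}.
Proof.
exists N; split=> // w /=; rewrite /override_on.
by case: ifPn => [/set_mem//|_ /(_ erefl)].
Qed.

Lemma Aset_override_on_VaR (p : R) (w : T) :
  Aset P p (override_on N (VaR P p Z) Z) w <-> ~ N w /\ Aset P p Z w.
Proof.
rewrite /Aset -(ae_eq_VaR mZ (measurable_override_on _) (ae_eq_override_on _)).
rewrite /override_on /=.
case: ifPn => [/set_mem Nw|/negP Nw]; last by split=> [|[]//]; split=> // /mem_set.
by rewrite ltxx; split=> // -[].
Qed.

End override_on_null_set.

Section weak_comonotonicity_across_a_cut.
Context (T : Type) (R : realType) (X Y : T -> R).

Lemma wcomon_points_le_levels_nested (a b : R) :
  wcomon_points [set w | a < X w] X Y ->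
  [set w | X w <= a] `<=` [set w | Y w <= b] \/
  [set w | Y w <= b] `<=` [set w | X w <= a].
Proof.
move=> XY; have [[w [aXw Ywb]]|noYb] := pselect (exists w, a < X w /\ Y w <= b).
- left=> w' /= Xw'a; apply: le_trans Ywb.
  have /XY : ~ (a < X w') by apply/negP; rewrite -leNgt.
  by move=> /(_ w aXw); rewrite pmulr_rge0 ?subr_ge0// subr_gt0 (le_lt_trans Xw'a).
- right=> w' /= Yw'b; rewrite leNgt; apply/negP => aXw'.
  by apply: noYb; exists w'.
Qed.

Lemma wcomon_points_eq_gt_levels (a b : R) :
  [set w | a < X w] = [set w | b < Y w] -> wcomon_points [set w | a < X w] X Y.
Proof.
move=> XY w w' aXw naXw'.
have /= bYw : [set w | b < Y w] w by rewrite -XY.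
have /= nbYw' : ~ [set w | b < Y w] w' by rewrite -XY.
have Xw'a : X w' <= a by rewrite leNgt; apply/negP.
have Yw'b : Y w' <= b by rewrite leNgt; apply/negP.
by rewrite mulr_ge0// subr_ge0 ltW//; [exact: le_lt_trans Xw'a _|exact: le_lt_trans Yw'b _].
Qed.

End weak_comonotonicity_across_a_cut.

Section weak_comonotonicity.
Context d (T : measurableType d) (R : realType) (P : probability T R).
Variables (p : R) (X Y : T -> R).

Lemma wcomon_PY_PX : wcomon_PY P p X Y <-> wcomon_PX P p Y X.
Proof.
by split=> -[X' [Y' [mX' mY' XX' YY' XY]]]; exists Y', X'; split=> // w w' Aw nAw';
  rewrite mulrC; exact: XY.
Qed.

Hypotheses (mX : measurable_fun setT X) (mY : measurable_fun setT Y).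
Hypotheses (cX : continuously_distributed P X) (cY : continuously_distributed P Y).
Hypothesis p01 : 0 < p < 1.

Lemma ae_Aset_of_wcomon_PX :
  wcomon_PX P p X Y -> {ae P, forall w, Aset P p X w <-> Aset P p Y w}.
Proof.
move=> [X' [Y' [mX' mY' XX' YY' XY]]].
suff : {ae P, forall w, Aset P p X' w <-> Aset P p Y' w}.
  apply: filterS3 (ae_eq_Aset mX mX' XX' p) (ae_eq_Aset mY mY' YY' p) => w.
  by move=> -> ->.
set U := [set w | X' w <= VaR P p X']; set V := [set w | Y' w <= VaR P p Y'].
have mU : measurable U by exact: measurable_le_level.
have mV : measurable V by exact: measurable_le_level.
have PU : P U = p%:E.
  by apply: measure_le_VaR => //; exact: ae_eq_continuously_distributed cX.
have PV : P V = p%:E.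
  by apply: measure_le_VaR => //; exact: ae_eq_continuously_distributed cY.
have PU_fin : P U \is a fin_num by rewrite PU.
have PV_fin : P V \is a fin_num by rewrite PV.
have UV : {ae P, forall w, U w <-> V w}.
  have [UV|VU] := wcomon_points_le_levels_nested (VaR P p Y') XY.
  - by apply: subset_measure_ae_iff => //; exact: etrans PU (esym PV).
  - by apply/ae_iff_sym/subset_measure_ae_iff => //; exact: etrans PV (esym PU).
apply: filterS UV => w UVw; rewrite /Aset /= !ltNge.
by split=> /negP nle; apply/negP => le; apply/nle/UVw.
Qed.

Lemma wcomon_PX_of_ae_Aset :
  {ae P, forall w, Aset P p X w <-> Aset P p Y w} -> wcomon_PX P p X Y.
Proof.
move=> [N [mN N0 sN]].
have XY w : ~ N w -> (Aset P p X w <-> Aset P p Y w).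
  by move=> Nw; apply: contra_notP Nw; exact: sN.
set X' := override_on N (VaR P p X) X; set Y' := override_on N (VaR P p Y) Y.
exists X', Y'; split; try exact: measurable_override_on; try exact: ae_eq_override_on.
have X'Y' w : Aset P p X' w <-> Aset P p Y' w.
  rewrite !Aset_override_on_VaR//.
  by split=> -[Nw Aw]; split=> //; apply/(XY w Nw).
by apply: wcomon_points_eq_gt_levels; apply/seteqP; split=> w /X'Y'.
Qed.

Lemma wcomon_PX_ae_AsetP :
  wcomon_PX P p X Y <-> {ae P, forall w, Aset P p X w <-> Aset P p Y w}.
Proof. by split; [exact: ae_Aset_of_wcomon_PX|exact: wcomon_PX_of_ae_Aset]. Qed.

End weak_comonotonicity.

Theorem lemma3p1 (R : realType) (d : measure_display) (Omega : measurableType d)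
  (P : probability Omega R) (X Y : Omega -> R) (p : R) :
  atomless P ->
  measurable_fun setT X -> measurable_fun setT Y ->
  continuously_distributed P X -> continuously_distributed P Y ->
  0 < p < 1 ->
  (wcomon_PX P p X Y <-> wcomon_PY P p X Y) /\
  (wcomon_PY P p X Y <-> {ae P, forall w, Aset P p X w <-> Aset P p Y w}).
Proof.
move=> _ mX mY cX cY p01.
have PX_ae := wcomon_PX_ae_AsetP mX mY cX cY p01.
have PY_ae : wcomon_PY P p X Y <-> {ae P, forall w, Aset P p X w <-> Aset P p Y w}.
  rewrite wcomon_PY_PX (wcomon_PX_ae_AsetP mY mX cY cX p01).
  by split; exact: ae_iff_sym.
by split; [rewrite PX_ae PY_ae|].
Qed.
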